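(* Let $G=(V,E)$ be a minimal hypergraph, let $V'\subseteq V$, and let $v\in V'$. Then $\mathcal{I}_v(G[V'])=(\mathcal{I}_v(G))[V']$, i.e. inverting at $v$ and taking the induced sub-hypergraph on $V'$ commute.
   Context: A simple hypergraph is a pair $G=(V,E)$ with $V$ a finite set and $E\subseteq 2^V$. For $e,f\in E$ with $e\subseteq f$, $e$ is a subedge of $f$; $f$ is minimal if its only subedge in $E$ is itself, and $G$ is a minimal hypergraph if every edge is minimal. $\mathrm{Min}(G)$ denotes the minimal hypergraph obtained from $G$ by deleting all non-minimal edges. For $V'\subseteq V$: the induced sub-hypergraph $G[V']$ is the hypergraph $(V', E\cap 2^{V'})$ (edges of $G$ contained in $V'$); the weak induced sub-hypergraph $G\langle V'\rangle$ is the (not necessarily minimal) hypergraph $(V',\{e\cap V' : e\in E\})$. The vertex inversion of $G$ at $v\in V$ is $\mathcal{I}_v(G)=\mathrm{Min}(G\langle V\setminus\{v\}\rangle)$. For a hypergraph $H$ whose vertex set does not contain $v$, $H[V']$ means the induced sub-hypergraph on $V'$ intersected with the vertex set of $H$. (Algebraically, $\mathcal{I}_x$ applied to the hypergraph of a squarefree monomial ideal $I$ gives the hypergraph of $I(x=1)$.) *)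

From mathcomp Require Import all_boot.
Set Implicit Arguments. Unset Strict Implicit. Unset Printing Implicit Defensive.

Record hypergraph (T : finType) := Hypergraph {
  hverts : {set T};
  hedges : {set {set T}} }.

Definition wf_hypergraph (T : finType) (G : hypergraph T) : Prop :=
  forall e, e \in hedges G -> e \subset hverts G.

Definition minimal_edge (T : finType) (G : hypergraph T) (e : {set T}) : bool :=
  [forall f in hedges G, (f \subset e) ==> (f == e)].

Definition minimal_hypergraph (T : finType) (G : hypergraph T) : Prop :=
  forall e, e \in hedges G -> minimal_edge G e.

Definition Min (T : finType) (G : hypergraph T) : hypergraph T :=
  Hypergraph (hverts G) [set e in hedges G | minimal_edge G e].

Definition induced (T : finType) (G : hypergraph T) (V' : {set T}) : hypergraph T :=
  Hypergraph (V' :&: hverts G) [set e in hedges G | e \subset V'].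

Definition weak_induced (T : finType) (G : hypergraph T) (V' : {set T}) : hypergraph T :=
  Hypergraph V' [set e :&: V' | e in hedges G].

Definition vinv (T : finType) (G : hypergraph T) (v : T) : hypergraph T :=
  Min (weak_induced G (hverts G :\ v)).

From mathcomp Require Import all_boot.

Set Implicit Arguments.
Unset Strict Implicit.
Unset Printing Implicit Defensive.

(* Taking induced sub-hypergraphs commutes with Min, since every subedge of an
   edge inside V' lies inside V' as well.  For a well-formed G the weak induced
   sub-hypergraph on V \ v just deletes v from every edge, and since v \in V'
   an edge e lies in V' exactly when e \ v does; so restricting to V' commutes
   with deleting v. *)

Section InducedMin.

Variables (T : finType) (H : hypergraph T) (V' : {set T}).

Lemma minimal_edge_induced (e : {set T}) :
  e \subset V' -> minimal_edge (induced H V') e = minimal_edge H e.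
Proof.
move=> eV'; apply/forallP/forallP => minH f; apply/implyP => fH;
  apply/implyP => fe; have := minH f.
- by rewrite inE fH (subset_trans fe eV') fe.
- by case/setIdP: fH => -> _; rewrite fe.
Qed.

Lemma Min_induced : Min (induced H V') = induced (Min H) V'.
Proof.
congr Hypergraph; apply/setP => e; rewrite !inE.
case: (boolP (e \subset V')) => eV'; last by rewrite !andbF.
by rewrite minimal_edge_induced // !andbT.
Qed.

End InducedMin.

Lemma imset_setIdE (aT rT : finType) (f : aT -> rT) (D : {set aT}) (P : pred rT) :
  [set y in f @: D | P y] = f @: [set x in D | P (f x)].
Proof.
apply/setP => y; rewrite inE; apply/andP/imsetP => [[/imsetP[x xD ->] Pfx]|[x]].
- by exists x; rewrite // inE xD.
- by rewrite inE => /andP[xD Pfx] ->; rewrite imset_f.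
Qed.

Lemma setD1_subset (T : finType) (A B : {set T}) (x : T) :
  x \in B -> (A :\ x \subset B) = (A \subset B).
Proof. by move=> xB; rewrite subDset (setUidPr _) ?sub1set. Qed.

Lemma wf_induced (T : finType) (G : hypergraph T) (V' : {set T}) :
  wf_hypergraph G -> wf_hypergraph (induced G V').
Proof. by move=> wfG e /setIdP[/wfG eV eV']; rewrite subsetI eV' eV. Qed.

Lemma weak_induced_setD1 (T : finType) (G : hypergraph T) (v : T) :
  wf_hypergraph G ->
  weak_induced G (hverts G :\ v)
  = Hypergraph (hverts G :\ v) [set e :\ v | e in hedges G].
Proof.
move=> wfG; congr Hypergraph; apply: eq_in_imset => e /wfG eV.
by rewrite setIDA; congr (_ :\: _); apply/setIidPl.
Qed.

Lemma weak_induced_induced_setD1 (T : finType) (G : hypergraph T) (V' : {set T}) (v : T) :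
  wf_hypergraph G -> v \in V' ->
  weak_induced (induced G V') (hverts (induced G V') :\ v)
  = induced (weak_induced G (hverts G :\ v)) V'.
Proof.
move=> wfG vV'.
rewrite (weak_induced_setD1 v (@wf_induced _ _ V' wfG)) weak_induced_setD1 //.
rewrite /induced /= setIDA imset_setIdE; symmetry.
by under eq_finset => e do rewrite (setD1_subset _ vV').
Qed.

Theorem lemma2p9 (T : finType) (G : hypergraph T) (V' : {set T}) (v : T) :
  wf_hypergraph G -> minimal_hypergraph G ->
  V' \subset hverts G -> v \in V' ->
  vinv (induced G V') v = induced (vinv G v) V'.
Proof.
move=> wfG _ _ vV'.
by rewrite /vinv weak_induced_induced_setD1 // Min_induced.
Qed.
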